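(* Let $S$ be a finite set of states and $N=I=\{1,\ldots,n\}$ a set of individuals, and let $p_1,\ldots,p_n\in\Delta(S)$ be individual beliefs. A profile $(\rho_1,\ldots,\rho_n)\in\Delta(S)^n$ is a (pure-strategy) Nash equilibrium of the log utility preference revelation game $(\Delta(S),U_{p_i})_{i\in N}$ if and only if there is a parimutuel equilibrium with equal wealth $(\rho,\mathbf{x})$ of the parimutuel market $(\mathbb{R}^S_+,p_i)_{i\in N}$ such that \[\rho_{is}=\frac{\rho_s x_{is}}{\sum_{s'\in S}\rho_{s'}x_{is'}}\quad\text{for all } i\in N,\ s\in S.\] In particular, in that case $\frac{1}{n}\sum_{i=1}^n\rho_i=\rho$.
   Context: $\Delta(S)$ is the set of probability distributions on $S$. The log utility preference revelation game for the profile $(p_1,\ldots,p_n)$ is the normal-form game in which each player $i\in N$ has strategy space $\Delta(S)$ and payoff function \[U_{p_i}(\rho_1,\ldots,\rho_n)=\sum_{s\in S}p_{i,s}\log\Big(\frac{1}{n}\sum_{j=1}^n\rho_{j,s}\Big),\] with the convention $0\times\log 0=0$ (payoffs may equal $-\infty$). (This is the payoff obtained when society aggregates reported beliefs by the symmetric linear opinion pool $f(\rho_1,\ldots,\rho_n)=\frac1n\sum_j\rho_j$ and then chooses the portfolio maximizing expected log utility over $\{x\in\mathbb{R}^S_+:\sum_s x_s=1\}$, whose optimum is $x=f(\rho)$.) The parimutuel market $(\mathbb{R}^S_+,p_i)_{i\in N}$ consists of consumers $i\in N$, each with consumption set $\mathbb{R}^S_+$ and linear utility $x\mapsto p_i\cdot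 x$. A parimutuel equilibrium with equal wealth is a pair $(\rho,\mathbf{x})$ with $\rho\in\Delta(S)$ (a price vector) and $\mathbf{x}=(x_1,\ldots,x_n)\in(\mathbb{R}^S_+)^N$ such that (1) for each $i$, $\rho\cdot x_i\le 1/n$ and $p_i\cdot x_i\ge p_i\cdot y$ for every $y\in\mathbb{R}^S_+$ with $\rho\cdot y\le 1/n$; and (2) $\sum_{i=1}^n x_i=(1,\ldots,1)$. *)

From HB Require Import structures.
From mathcomp Require Import all_boot all_order all_algebra.
From mathcomp Require Import all_classical all_reals all_analysis.
Set Implicit Arguments. Unset Strict Implicit. Unset Printing Implicit Defensive.
Import Order.TTheory GRing.Theory Num.Theory.
Local Open Scope ring_scope.

Section Defs.
Variables (R : realType) (S : finType).

Definition is_distr (q : S -> R) : Prop :=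
  (forall s, 0 <= q s) /\ \sum_(s : S) q s = 1.

Definition dotS (a b : S -> R) : R := \sum_(s : S) a s * b s.

Definition pool (n : nat) (rho : 'I_n -> S -> R) : S -> R :=
  fun s => n%:R^-1 * \sum_(j < n) rho j s.

(* p_s * log(a_s) with convention 0 * log 0 = 0 (and p_s*log 0 = -oo if p_s > 0) *)
Definition plog (ps a : R) : \bar R :=
  if ps == 0 then 0%E
  else if 0 < a then (ps * ln a)%:E else -oo%E.

Definition log_payoff (n : nat) (p : S -> R) (rho : 'I_n -> S -> R) : \bar R :=
  (\sum_(s : S) plog (p s) (pool rho s))%E.

Definition deviate (n : nat) (rho : 'I_n -> S -> R) (i : 'I_n) (sigma : S -> R)
  : 'I_n -> S -> R := fun j => if j == i then sigma else rho j.

Definition nash_eq (n : nat) (p : 'I_n -> S -> R) (rho : 'I_n -> S -> R) : Prop :=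
  (forall i, is_distr (rho i)) /\
  forall i sigma, is_distr sigma ->
    (log_payoff (p i) (deviate rho i sigma) <= log_payoff (p i) rho)%E.

Definition parimutuel_eq (n : nat) (p : 'I_n -> S -> R)
    (price : S -> R) (x : 'I_n -> S -> R) : Prop :=
  is_distr price /\
  (forall i s, 0 <= x i s) /\
  (forall i, dotS price (x i) <= n%:R^-1 /\
     forall y : S -> R, (forall s, 0 <= y s) -> dotS price y <= n%:R^-1 ->
       dotS (p i) y <= dotS (p i) (x i)) /\
  (forall s, \sum_(i < n) x i s = 1).

End Defs.

From HB Require Import structures.
From mathcomp Require Import all_boot all_order all_algebra.
From mathcomp Require Import all_classical all_reals all_analysis.
From mathcomp Require Import ring lra.
Import Order.TTheory GRing.Theory Num.Theory.
Set Implicit Arguments. Unset Strict Implicit. Unset Printing Implicit Defensive.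
Local Open Scope ring_scope.

(** Player i's payoff, as a function of its own report sigma, is the
    concave function sum_s p_is ln (q_s + (sigma_s - rho_is) / n) of the pooled
    belief q, so rho is a Nash equilibrium iff every rho_i satisfies the first-order
    condition p_is <= A_i q_s for all s, with A_i = sum_s p_is rho_is / q_s.  A linear
    consumer with wealth 1/n facing prices q is at an optimum iff p_is / n <= (p_i . x_i) q_s.
    With x_is = rho_is / (n q_s) the two conditions coincide (A_i = n p_i . x_i), the
    budgets bind, and the market clears because q is the average report; conversely,
    budgets bind in any parimutuel equilibrium, so rho_is = n q_s x_is and the pool of
    the reports is the price. *)

Section LnBounds.
Variable R : realType.

Lemma ln_sub_le (a b : R) : 0 < a -> 0 < b -> ln b - ln a <= b / a - 1.
Proof.
move=> a_gt0 b_gt0; rewrite -ln_div ?posrE // -{1}[b / a](subrK 1) addrC.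
by apply: le_ln1Dx; rewrite ltrBrDl subrr divr_gt0.
Qed.

Lemma ln_sub_ge (a b : R) : 0 < a -> 0 < b -> (b - a) / b <= ln b - ln a.
Proof.
move=> a_gt0 b_gt0; rewrite mulrBl divff ?gt_eqF //.
by have := ln_sub_le b_gt0 a_gt0; lra.
Qed.

End LnBounds.

Section SupportSums.
Variables (R : realType) (S : finType) (p q q' : S -> R).
Hypotheses (p_ge0 : forall s, 0 <= p s) (q_gt0 : forall s, p s != 0 -> 0 < q s)
  (q'_gt0 : forall s, p s != 0 -> 0 < q' s).

Lemma sum_ln_sub_le :
  \sum_(s | p s != 0) p s * ln (q' s) - \sum_(s | p s != 0) p s * ln (q s)
  <= \sum_(s | p s != 0) p s * (q' s - q s) / q s.
Proof.
rewrite -sumrB; apply: ler_sum => s ps; rewrite -mulrBr -mulrA ler_wpM2l //.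
by rewrite mulrBl divff ?gt_eqF ?q_gt0 // ln_sub_le ?q_gt0 ?q'_gt0.
Qed.

Lemma sum_ln_sub_ge :
  \sum_(s | p s != 0) p s * (q' s - q s) / q' s
  <= \sum_(s | p s != 0) p s * ln (q' s) - \sum_(s | p s != 0) p s * ln (q s).
Proof.
rewrite -sumrB; apply: ler_sum => s ps; rewrite -mulrBr -mulrA ler_wpM2l //.
by rewrite ln_sub_ge ?q_gt0 ?q'_gt0.
Qed.

End SupportSums.

Section Distributions.
Variables (R : realType) (S : finType).

Definition point_mass (s0 : S) : S -> R := fun s => (s == s0)%:R.

Lemma sum_mul_point_mass (P : pred S) (F : S -> R) s0 :
  P s0 -> \sum_(s | P s) F s * point_mass s0 s = F s0.
Proof.
move=> Ps0; rewrite (bigD1 s0) //= /point_mass eqxx mulr1 big1 ?addr0 //.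
by move=> s /andP[_ /negbTE ->]; rewrite mulr0.
Qed.

Lemma dotS_point_mass (a : S -> R) c s0 :
  dotS a (fun s => c * point_mass s0 s) = c * a s0.
Proof.
rewrite /dotS -(sum_mul_point_mass (fun s => c * a s) (P := predT)) //.
by apply: eq_bigr => s _; rewrite mulrCA mulrA.
Qed.

Lemma is_distr_point_mass s0 : is_distr (point_mass s0).
Proof.
split=> [s|]; first exact: ler0n.
by under eq_bigr do rewrite -[point_mass _ _]mul1r; rewrite sum_mul_point_mass.
Qed.

Lemma is_distr_mix (a b : S -> R) t : 0 <= t <= 1 -> is_distr a -> is_distr b ->
  is_distr (fun s => (1 - t) * a s + t * b s).
Proof.
move=> /andP[t_ge0 t_le1] [a_ge0 a_sum] [b_ge0 b_sum]; split=> [s|].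
  by rewrite addr_ge0 ?mulr_ge0 ?subr_ge0.
by rewrite big_split /= -!mulr_sumr a_sum b_sum !mulr1 subrK.
Qed.

Lemma support_gt0 (p q : S -> R) c : (forall s, 0 <= p s) -> (forall s, 0 <= q s) ->
  (forall s, p s <= c * q s) -> forall s, p s != 0 -> 0 < q s.
Proof.
move=> p_ge0 q_ge0 p_le s ps; rewrite lt_def q_ge0 andbT.
apply: contra_neq ps => q0; apply/le_anti; rewrite p_ge0 andbT.
by rewrite (le_trans (p_le s)) // q0 mulr0.
Qed.

End Distributions.

Arguments point_mass {R S} s0 _.

Section Pool.
Variables (R : realType) (S : finType) (n : nat).
Implicit Types (rho : 'I_n -> S -> R) (i : 'I_n) (s : S).

Lemma pool_deviate_sub rho i sigma s :
  pool (deviate rho i sigma) s - pool rho s = n%:R^-1 * (sigma s - rho i s).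
Proof.
rewrite /pool (bigD1 i) //= [in X in _ - X](bigD1 i) //= /deviate eqxx.
rewrite (eq_bigr (fun j => rho j s)); last by move=> j /negbTE ->.
ring.
Qed.

Lemma pool_ge rho i s : (forall j, 0 <= rho j s) -> n%:R^-1 * rho i s <= pool rho s.
Proof.
move=> rho_ge0; rewrite /pool ler_wpM2l ?invr_ge0 ?ler0n //.
by rewrite (bigD1 i) //= lerDl sumr_ge0.
Qed.

Lemma is_distr_pool rho : (0 < n)%N -> (forall j, is_distr (rho j)) -> is_distr (pool rho).
Proof.
move=> n_gt0 rho_distr; split=> [s|].
  by rewrite /pool mulr_ge0 ?invr_ge0 ?ler0n ?sumr_ge0 // => j _; case: (rho_distr j).
rewrite /pool -mulr_sumr exchange_big /=.
rewrite (eq_bigr (fun=> 1)) => [|j _]; last by case: (rho_distr j).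
by rewrite sumr_const card_ord mulVf // pnatr_eq0 -lt0n.
Qed.

End Pool.

Section LogPayoff.
Variables (R : realType) (S : finType) (n : nat) (p : S -> R) (rho : 'I_n -> S -> R).

Lemma log_payoffE : (forall s, p s != 0 -> 0 < pool rho s) ->
  log_payoff p rho = (\sum_(s | p s != 0) p s * ln (pool rho s))%:E.
Proof.
move=> pool_gt0; rewrite big_mkcond /log_payoff -sumEFin; apply: eq_bigr => s _.
by rewrite /plog; case: eqP => //= /eqP ps; rewrite pool_gt0.
Qed.

Lemma log_payoff_Ny s : p s != 0 -> pool rho s <= 0 -> log_payoff p rho = -oo%E.
Proof.
move=> ps pool_le0; rewrite /log_payoff (bigD1 s) //= /plog (negbTE ps).
by rewrite ltNge pool_le0 addNye.
Qed.

End LogPayoff.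

Lemma ler_of_forall_small (R : realFieldType) (a b c : R) : 0 <= c ->
  (forall t, 0 < t < 1 -> a <= b + t * c) -> a <= b.
Proof.
move=> c_ge0 a_le; apply/ler_addgt0Pr => e e_gt0.
have d_gt0 : 0 < e + (e + c) by rewrite addr_gt0 ?ltr_wpDr.
apply: (le_trans (a_le (e / (e + (e + c))) _)).
  by rewrite divr_gt0 //= ltr_pdivrMr // mul1r ltrDl ltr_wpDr.
by rewrite lerD2l mulrAC ler_pdivrMr // ler_pM2l //; lra.
Qed.

Section BestResponse.
Variables (R : realType) (S : finType) (n : nat) (n_gt0 : (0 < n)%N).
Variables (p : S -> R) (rho : 'I_n -> S -> R) (i : 'I_n).
Hypotheses (p_ge0 : forall s, 0 <= p s) (rho_distr : forall j, is_distr (rho j)).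

Definition best_response : Prop := forall sigma, is_distr sigma ->
  (log_payoff p (deviate rho i sigma) <= log_payoff p rho)%E.

(* The (n-scaled) derivative of the payoff in the direction of rho i itself; in the
   direction of state s it is p s / pool rho s. *)
Definition lagrange_mult : R := \sum_(s | p s != 0) p s * rho i s / pool rho s.

Let pool_ge0 s : 0 <= pool rho s. Proof. exact: (is_distr_pool n_gt0 rho_distr).1. Qed.

Let rho_ge0 j s : 0 <= rho j s. Proof. exact: (rho_distr j).1. Qed.

Let rho_le_pool s : n%:R^-1 * rho i s <= pool rho s.
Proof. exact: pool_ge. Qed.

Lemma lagrange_mult_ge0 : 0 <= lagrange_mult.
Proof.
by apply: sumr_ge0 => s _; apply: divr_ge0 (pool_ge0 s); exact: mulr_ge0.
Qed.

Lemma lagrange_multE (x : S -> R) : (forall s, p s != 0 -> 0 < pool rho s) ->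
  (forall s, rho i s = n%:R * (pool rho s * x s)) -> lagrange_mult = n%:R * dotS p x.
Proof.
move=> pool_gt0 rhoE; rewrite /dotS mulr_sumr (bigID (fun s => p s != 0)) /=.
rewrite [X in _ + X]big1 ?addr0 => [|s /negPn /eqP ->]; last by rewrite mul0r mulr0.
apply: eq_bigr => s ps; rewrite rhoE; field; exact/lt0r_neq0/pool_gt0.
Qed.

Lemma best_response_pool_gt0 : best_response -> forall s, p s != 0 -> 0 < pool rho s.
Proof.
move=> br s ps; rewrite ltNge; apply/negP => pool_le0.
have S_gt0 : (0 < #|S|)%N by apply/card_gt0P; exists s.
pose u : S -> R := fun=> #|S|%:R^-1.
have u_distr : is_distr u.
  split=> [t|]; first by rewrite invr_ge0 ler0n.
  by rewrite sumr_const -[_ *+ #|_|]mulr_natr mulVf // pnatr_eq0 -lt0n.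
have := br u u_distr; rewrite (log_payoff_Ny ps pool_le0) leeNy_eq.
rewrite log_payoffE // => t _.
have := pool_deviate_sub rho i u t; have := rho_le_pool t.
have : 0 < n%:R^-1 * u t by rewrite mulr_gt0 // invr_gt0 ltr0n.
rewrite mulrBr; lra.
Qed.

Lemma best_response_deviation_le sigma : best_response -> is_distr sigma ->
  (forall s, p s != 0 -> 0 < pool (deviate rho i sigma) s) ->
  \sum_(s | p s != 0) p s * sigma s / pool (deviate rho i sigma) s
    <= \sum_(s | p s != 0) p s * rho i s / pool (deviate rho i sigma) s.
Proof.
move=> br sigma_distr dev_gt0; have pool_gt0 := best_response_pool_gt0 br.
have := br _ sigma_distr; rewrite !log_payoffE // lee_fin -subr_le0.
move=> /(le_trans (sum_ln_sub_ge p_ge0 pool_gt0 dev_gt0)).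
under eq_bigr do rewrite pool_deviate_sub.
move=> le0; rewrite -subr_le0 -sumrB -(@pmulr_rle0 _ n%:R^-1) ?invr_gt0 ?ltr0n //.
rewrite mulr_sumr (eq_bigr (fun s => p s * (n%:R^-1 * (sigma s - rho i s))
  / pool (deviate rho i sigma) s)) // => s _; ring.
Qed.

Lemma best_response_mix_bound s0 t : best_response -> p s0 != 0 -> 0 < t < 1 ->
  (1 - t) * p s0 <= lagrange_mult * (pool rho s0 + t * n%:R^-1).
Proof.
move=> br ps0 /andP[t_gt0 t_lt1].
pose sigma s := (1 - t) * rho i s + t * point_mass s0 s.
have sigma_distr : is_distr sigma.
  by apply: is_distr_mix (rho_distr i) (is_distr_point_mass _ s0); rewrite !ltW.
set q' := pool (deviate rho i sigma).
have q'E s : q' s = (1 - t) * pool rho s + t * (pool rho s - n%:R^-1 * rho i s)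
                     + t * n%:R^-1 * point_mass s0 s.
  by rewrite -[q' s](subrK (pool rho s)) /q' pool_deviate_sub /sigma; ring.
have q'_ge s : (1 - t) * pool rho s <= q' s.
  rewrite q'E -addrA lerDl addr_ge0 ?mulr_ge0 ?subr_ge0 ?rho_le_pool ?invr_ge0 //;
    exact: ltW.
have q'_gt0 s : p s != 0 -> 0 < q' s.
  move=> ps; apply: lt_le_trans (q'_ge s).
  by rewrite mulr_gt0 ?subr_gt0 ?best_response_pool_gt0.
set B := \sum_(s | p s != 0) p s * rho i s / q' s.
have p_le_B : p s0 / q' s0 <= B.
  have := best_response_deviation_le br sigma_distr q'_gt0; rewrite -/q' -/B.
  rewrite (eq_bigr (fun s => (1 - t) * (p s * rho i s / q' s)
    + t * p s / q' s * point_mass s0 s)) => [|s _]; last by rewrite /sigma; ring.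
  rewrite big_split /= -mulr_sumr sum_mul_point_mass // -/B.
  nra.
have B_le : (1 - t) * B <= lagrange_mult.
  rewrite mulr_sumr; apply: ler_sum => s ps.
  rewrite mulrCA; apply: ler_wpM2l; first exact: mulr_ge0.
  rewrite ler_pdivrMr ?q'_gt0 // ler_pdivlMl ?best_response_pool_gt0 //.
  by rewrite mulrC q'_ge.
have q'_le : q' s0 <= pool rho s0 + t * n%:R^-1.
  have : 0 <= t * (n%:R^-1 * rho i s0).
    by apply: mulr_ge0; [exact: ltW | rewrite mulr_ge0 ?invr_ge0].
  rewrite q'E /point_mass eqxx mulr1; lra.
apply: le_trans (ler_wpM2l lagrange_mult_ge0 q'_le).
apply: le_trans (ler_wpM2r (ltW (q'_gt0 _ ps0)) B_le).
by rewrite -mulrA ler_pM2l ?subr_gt0 // -ler_pdivrMr ?q'_gt0.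
Qed.

Lemma best_response_foc : best_response -> forall s, p s <= lagrange_mult * pool rho s.
Proof.
move=> br s; have [->|ps] := eqVneq (p s) 0.
  by rewrite mulr_ge0 ?lagrange_mult_ge0.
apply: (@ler_of_forall_small _ _ _ (p s + lagrange_mult * n%:R^-1)).
  by rewrite addr_ge0 ?mulr_ge0 ?lagrange_mult_ge0 ?invr_ge0.
move=> t t01; have := best_response_mix_bound br ps t01; lra.
Qed.

Lemma foc_best_response : (forall s, p s <= lagrange_mult * pool rho s) -> best_response.
Proof.
move=> foc sigma [sigma_ge0 sigma_sum].
have pool_gt0 := support_gt0 p_ge0 pool_ge0 foc.
have [/existsP[s /andP[ps dev_le0]]|/existsPn dev_gt0] :=
  boolP [exists s, (p s != 0) && (pool (deviate rho i sigma) s <= 0)].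
  by rewrite (log_payoff_Ny ps dev_le0) leNye.
have {}dev_gt0 s : p s != 0 -> 0 < pool (deviate rho i sigma) s.
  by move=> ps; move: (dev_gt0 s); rewrite ps /= -ltNge.
rewrite !log_payoffE // lee_fin -subr_le0.
apply: le_trans (sum_ln_sub_le p_ge0 pool_gt0 dev_gt0) _.
rewrite (eq_bigr (fun s => n%:R^-1 * (p s / pool rho s * sigma s
  - p s * rho i s / pool rho s))) => [|s _]; last by rewrite pool_deviate_sub; ring.
rewrite -mulr_sumr sumrB pmulr_rle0 ?invr_gt0 ?ltr0n // subr_le0 -/lagrange_mult.
apply: (@le_trans _ _ (\sum_s lagrange_mult * sigma s)); last first.
  by rewrite -mulr_sumr sigma_sum mulr1.
rewrite big_mkcond /=; apply: ler_sum => s _; case: ifP => [ps|_].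
  by rewrite ler_wpM2r // ler_pdivrMr ?pool_gt0.
by rewrite mulr_ge0 ?lagrange_mult_ge0.
Qed.

Lemma best_responseP : best_response <-> forall s, p s <= lagrange_mult * pool rho s.
Proof. by split; [exact: best_response_foc | exact: foc_best_response]. Qed.

End BestResponse.

Section LinearDemand.
Variables (R : realType) (S : finType) (price p x : S -> R) (b : R).
Hypotheses (b_gt0 : 0 < b) (price_ge0 : forall s, 0 <= price s) (px_ge0 : 0 <= dotS p x).

Lemma linear_demand_optimalP :
  (forall y, (forall s, 0 <= y s) -> dotS price y <= b -> dotS p y <= dotS p x) <->
  (forall s, p s * b <= dotS p x * price s).
Proof.
split=> [opt s | bound y y_ge0 budget].
  have [price0|price_neq0] := eqVneq (price s) 0.
    rewrite price0 mulr0 pmulr_lle0 // leNgt; apply/negP => ps_gt0.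
    pose M := (dotS p x + 1) / p s.
    have y_ge0 t : 0 <= M * point_mass s t.
      by rewrite mulr_ge0 ?ler0n // divr_ge0 ?addr_ge0 // ltW.
    have := opt _ y_ge0; rewrite !dotS_point_mass price0 mulr0 ltW //.
    by rewrite divfK ?gt_eqF // => /(_ isT); lra.
  have price_gt0 : 0 < price s by rewrite lt_def price_neq0 price_ge0.
  have y_ge0 t : 0 <= b / price s * point_mass s t.
    by rewrite !mulr_ge0 ?invr_ge0 ?ler0n // ltW.
  have := opt _ y_ge0; rewrite !dotS_point_mass divfK ?gt_eqF // lexx => /(_ isT).
  by rewrite mulrAC ler_pdivrMr // [b * _]mulrC.
apply: (@le_trans _ _ (dotS p x / b * dotS price y)).
  rewrite /dotS mulr_sumr; apply: ler_sum => s _; rewrite mulrA ler_wpM2r //.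
  by rewrite mulrAC ler_pdivlMr.
rewrite -{2}(divfK (lt0r_neq0 b_gt0) (dotS p x)); apply: ler_wpM2l budget.
exact: divr_ge0 px_ge0 (ltW b_gt0).
Qed.

End LinearDemand.

Section Parimutuel.
Variables (R : realType) (S : finType) (n : nat) (n_gt0 : (0 < n)%N).
Variables (p : 'I_n -> S -> R) (price : S -> R) (x : 'I_n -> S -> R).
Hypotheses (p_ge0 : forall i s, 0 <= p i s) (hpe : parimutuel_eq p price x).

Lemma parimutuel_budget i : dotS price (x i) = n%:R^-1.
Proof.
have [[_ price_sum] [_ [opt clear]]] := hpe.
have slack_sum : \sum_(j < n) (n%:R^-1 - dotS price (x j)) = 0.
  rewrite sumrB sumr_const card_ord -[_ *+ n]mulr_natr mulVf ?pnatr_eq0 -?lt0n //.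
  rewrite /dotS exchange_big /=.
  by under eq_bigr do rewrite -mulr_sumr clear mulr1; rewrite price_sum subrr.
have slack_ge0 j : true -> 0 <= n%:R^-1 - dotS price (x j).
  by rewrite subr_ge0 (opt j).1.
by apply/eqP; rewrite eq_sym -subr_eq0; apply/eqP/(psumr_eq0P slack_ge0 slack_sum).
Qed.

Lemma parimutuel_price_bound i s : p i s <= n%:R * dotS (p i) (x i) * price s.
Proof.
have [[price_ge0 _] [x_ge0 [opt _]]] := hpe.
have px_ge0 : 0 <= dotS (p i) (x i) by apply: sumr_ge0 => t _; rewrite mulr_ge0.
have nV_gt0 : 0 < n%:R^-1 :> R by rewrite invr_gt0 ltr0n.
have := (linear_demand_optimalP nV_gt0 price_ge0 px_ge0).1 (opt i).2 s.
by rewrite ler_pdivrMr ?ltr0n // mulrC mulrA.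
Qed.

End Parimutuel.

Section FromParimutuel.
Variables (R : realType) (S : finType) (n : nat) (n_gt0 : (0 < n)%N).
Variables (p : 'I_n -> S -> R) (price : S -> R) (x rho : 'I_n -> S -> R).
Hypotheses (p_ge0 : forall i s, 0 <= p i s) (hpe : parimutuel_eq p price x).
Hypothesis hrho : forall i s, rho i s = price s * x i s / dotS price (x i).

Lemma parimutuel_rhoE i s : rho i s = n%:R * (price s * x i s).
Proof. by rewrite hrho (parimutuel_budget n_gt0 hpe) invrK mulrC. Qed.

Lemma parimutuel_pool : pool rho = price.
Proof.
have [_ [_ [_ clear]]] := hpe.
apply/funext => s; rewrite /pool; under eq_bigr do rewrite parimutuel_rhoE.
by rewrite -mulr_sumr mulKf ?pnatr_eq0 -?lt0n // -mulr_sumr clear mulr1.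
Qed.

Lemma parimutuel_nash : nash_eq p rho.
Proof.
have [[price_ge0 _] [x_ge0 _]] := hpe.
have rho_distr j : is_distr (rho j).
  split=> [s|]; first by rewrite parimutuel_rhoE !mulr_ge0 ?ler0n.
  under eq_bigr do rewrite parimutuel_rhoE.
  rewrite -mulr_sumr -/(dotS price (x j)) (parimutuel_budget n_gt0 hpe).
  by rewrite mulfV // pnatr_eq0 -lt0n.
split=> // i; apply/(best_responseP n_gt0 i (p_ge0 i) rho_distr).
have bound := parimutuel_price_bound n_gt0 p_ge0 hpe i.
have price_gt0 := support_gt0 (p_ge0 i) price_ge0 bound.
rewrite parimutuel_pool (lagrange_multE (x := x i)) ?parimutuel_pool //.
exact: parimutuel_rhoE.
Qed.

End FromParimutuel.

Section FromNash.
Variables (R : realType) (S : finType) (n : nat) (n_gt0 : (0 < n)%N).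
Variables (p rho : 'I_n -> S -> R).
Hypotheses (p_ge0 : forall i s, 0 <= p i s) (hn : nash_eq p rho).

(* Where the pool vanishes every report vanishes, and splitting the state equally
   clears the market. *)
Definition nash_demand (i : 'I_n) (s : S) : R :=
  if 0 < pool rho s then rho i s / (n%:R * pool rho s) else n%:R^-1.

Let rho_distr : forall j, is_distr (rho j) := hn.1.
Let pool_distr : is_distr (pool rho) := is_distr_pool n_gt0 rho_distr.

Lemma pool_mul_nash_demand i s : pool rho s * nash_demand i s = n%:R^-1 * rho i s.
Proof.
rewrite /nash_demand; case: ifP => [pool_gt0|/negbT].
  by field; rewrite pnatr_eq0 -lt0n n_gt0 lt0r_neq0.
rewrite -leNgt => pool_le0.
have pool0 : pool rho s = 0 by apply/le_anti; rewrite pool_le0 pool_distr.1.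
have := pool_ge i (fun j => (rho_distr j).1 s); rewrite pool0 mul0r.
have : 0 <= n%:R^-1 * rho i s by rewrite mulr_ge0 ?invr_ge0 ?ler0n ?(rho_distr i).1.
lra.
Qed.

Lemma dotS_pool_nash_demand i : dotS (pool rho) (nash_demand i) = n%:R^-1.
Proof.
rewrite /dotS; under eq_bigr do rewrite pool_mul_nash_demand.
by rewrite -mulr_sumr (rho_distr i).2 mulr1.
Qed.

Lemma nash_parimutuel : parimutuel_eq p (pool rho) nash_demand.
Proof.
have nash_demand_ge0 i s : 0 <= nash_demand i s.
  rewrite /nash_demand; case: ifP => [pool_gt0|_]; last by rewrite invr_ge0 ler0n.
  by rewrite divr_ge0 ?(rho_distr i).1 // mulr_ge0 ?ler0n // ltW.
split=> //; split=> //; split=> [i|s].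
  split; first by rewrite dotS_pool_nash_demand.
  have px_ge0 : 0 <= dotS (p i) (nash_demand i).
    by apply: sumr_ge0 => s _; rewrite mulr_ge0.
  apply/(linear_demand_optimalP _ pool_distr.1 px_ge0); first by rewrite invr_gt0 ltr0n.
  have br : best_response (p i) rho i := hn.2 i.
  move=> s; have := (best_responseP n_gt0 i (p_ge0 i) rho_distr).1 br s.
  rewrite (lagrange_multE (x := nash_demand i)) => [| |t].
  - by move=> bound; rewrite ler_pdivrMr ?ltr0n // [_ * n%:R]mulrC mulrA.
  - by move=> t; apply: (best_response_pool_gt0 n_gt0 rho_distr br).
  - by rewrite pool_mul_nash_demand mulVKf // pnatr_eq0 -lt0n.
rewrite /nash_demand; case: (boolP (0 < pool rho s)) => [pool_gt0|_] /=.
  have rho_sum : \sum_(i < n) rho i s = n%:R * pool rho s.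
    by rewrite /pool mulrA mulfV ?mul1r // pnatr_eq0 -lt0n.
  rewrite -mulr_suml rho_sum mulfV //.
  by apply: mulf_neq0; [rewrite pnatr_eq0 -lt0n | exact: lt0r_neq0].
by rewrite sumr_const card_ord -[_ *+ n]mulr_natr mulVf // pnatr_eq0 -lt0n.
Qed.

End FromNash.

Theorem proposition3 (R : realType) (S : finType) (n : nat) (n_gt0 : (0 < n)%N)
    (p : 'I_n -> S -> R) (hp : forall i, is_distr (p i)) :
  (forall rho : 'I_n -> S -> R,
     nash_eq p rho <->
     exists (price : S -> R) (x : 'I_n -> S -> R),
       parimutuel_eq p price x /\
       forall i s, rho i s = price s * x i s / dotS price (x i))
  /\
  (forall (rho : 'I_n -> S -> R) (price : S -> R) (x : 'I_n -> S -> R),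
     nash_eq p rho -> parimutuel_eq p price x ->
     (forall i s, rho i s = price s * x i s / dotS price (x i)) ->
     pool rho = price).
Proof.
have p_ge0 i s : 0 <= p i s by case: (hp i).
split=> [rho|rho price x _ hpe hrho]; last exact: (parimutuel_pool n_gt0 hpe hrho).
split=> [hn|[price [x [hpe hrho]]]]; last exact: (parimutuel_nash n_gt0 p_ge0 hpe hrho).
exists (pool rho), (nash_demand rho); split; first exact: (nash_parimutuel n_gt0 p_ge0 hn).
move=> i s; rewrite (pool_mul_nash_demand n_gt0 hn) (dotS_pool_nash_demand n_gt0 hn).
by rewrite invrK mulrAC mulVf ?mul1r // pnatr_eq0 -lt0n.
Qed.
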